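(* Let $s,b\ge1$ and let $(a_n)$ be the $(s,b)$-Generacci sequence. Define $f$ on positive integers by $f(kb+j)=sb+j-1$ for $k\ge0$ and $j\in\{1,\dots,b\}$. Then for every integer $N\ge s$ and every $j\in\{2,\dots,b+1\}$, writing $n=j+Nb$, \[ a_n \;=\; a_{n-1}+a_{n-1-f(n-1)}, \qquad\text{i.e.}\qquad a_{j+Nb}=a_{j-1+Nb}+a_{1+(N-s)b}. \]
   Context: Fix integers $s,b\ge1$. For an increasing sequence of positive integers $(a_i)_{i\ge1}$, the bins are $\mathcal B_n=\{a_{b(n-1)+1},\dots,a_{bn}\}$ for $n\ge1$, and $\mathcal B_n=\emptyset$ for $n\le 0$. An $(s,b)$-Generacci legal decomposition of a positive integer $m$ using this sequence is an expression $m=a_{\ell_1}+\cdots+a_{\ell_k}$ with $a_{\ell_1}>a_{\ell_2}>\cdots>a_{\ell_k}$ such that for all $i$ and all $j$, $\{a_{\ell_i},a_{\ell_{i+1}}\}\not\subset \mathcal B_{j-s}\cup\mathcal B_{j-s+1}\cup\cdots\cup\mathcal B_j$ (so no two summands lie in the same bin, and the bins containing any two summands have at least $s$ bins strictly between them). The $(s,b)$-Generacci sequence is the increasing sequence of positive integers $(a_i)_{i\ge1}$ in which each $a_i$ is the smallest positive integer that has no $(s,b)$-Generacci legal decomposition using only elements of $\{a_1,\dots,a_{i-1}\}$. *)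

From mathcomp Require Import all_boot.
Set Implicit Arguments. Unset Strict Implicit. Unset Printing Implicit Defensive.

(* Sequences are functions a : nat -> nat, indexed from 1 (a 0 is unused).
   Bin number of the index l >= 1: B_n = {a_{b(n-1)+1},...,a_{bn}}, so the
   term a_l lies in bin (l-1)/b + 1. *)
Definition bin (b l : nat) : nat := l.-1 %/ b + 1.

(* Bins with nonpositive number are empty; since bins of actual terms are
   >= 1, truncated subtraction j - s and j ranging over nat are harmless
   (for j < 0 the union is empty, so the condition fails anyway). *)
Definition in_window (s b j x y : nat) : Prop :=
  j - s <= bin b x <= j /\ j - s <= bin b y <= j.

Definition legal_pair (s b x y : nat) : Prop :=
  forall j : nat, ~ in_window s b j x y.

Fixpoint legal_chain (s b : nat) (l : seq nat) : Prop :=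
  match l with
  | x :: ((y :: _) as l') => legal_pair s b x y /\ legal_chain s b l'
  | _ => True
  end.

Definition legal_decomp (s b : nat) (a : nat -> nat) (i m : nat)
  (l : seq nat) : Prop :=
  [/\ sorted (fun x y => a y < a x) l,
      all (fun x => (1 <= x) && (x < i)) l,
      \sum_(x <- l) a x = m
    & legal_chain s b l].

Definition has_legal_decomp (s b : nat) (a : nat -> nat) (i m : nat) : Prop :=
  exists l, legal_decomp s b a i m l.

Definition is_generacci (s b : nat) (a : nat -> nat) : Prop :=
  forall i, 1 <= i ->
    [/\ 0 < a i,
        ~ has_legal_decomp s b a i (a i)
      & forall m, 0 < m -> m < a i -> has_legal_decomp s b a i m].

(* f(kb + j) = sb + j - 1 for k >= 0, 1 <= j <= b. *)
Definition genf (s b x : nat) : nat := s * b + x.-1 %% b.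

From mathcomp Require Import all_boot zify.
Set Implicit Arguments. Unset Strict Implicit.

(* Write back(k) for the first index of the bin s places before the bin of
   a_k.  A summand of index x <= k may follow a_k in a legal decomposition
   exactly when x < back(k).  A greedy argument then shows that c_1 = 1,
   c_(k+1) = c_k + c_back(k) is the Generacci sequence: every
   0 < m < c_k + c_back(k) has a legal decomposition with indices <= k
   (take a_k, or not, and recurse below back(k)), while no legal
   decomposition with indices <= k reaches c_k + c_back(k), by induction on
   the number of summands.  For n - 1 = i + 1 + Nb with i < b, back(n - 1)
   is 1 + (N - s)b = n - 1 - f(n - 1). *)

Definition bin_start (b B : nat) : nat := 1 + B.-1 * b.

(* When bin b k <= s this is the junk value 1, below every index. *)
Definition back (s b k : nat) : nat := bin_start b (bin b k - s).

Lemma leq_bin b x y : x <= y -> bin b x <= bin b y.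
Proof. by move=> le_xy; rewrite /bin leq_add2r leq_div2r // -!subn1 leq_sub2r. Qed.

Lemma bin_start_gt b B x : 0 < b -> 0 < x -> (x < bin_start b B) = (bin b x < B).
Proof.
move=> b_gt0 x_gt0; have -> : (x < bin_start b B) = (x.-1 < B.-1 * b).
  by rewrite /bin_start; lia.
by rewrite -ltn_divLR // /bin; set q := _ %/ _; lia.
Qed.

Lemma ltn_back s b k x : 0 < b -> 0 < x -> (x < back s b k) = (bin b x + s < bin b k).
Proof. by move=> b_gt0 x_gt0; rewrite /back bin_start_gt // ltn_subRL addnC. Qed.

Lemma back_gt0 s b k : 0 < back s b k.
Proof. by []. Qed.

Lemma back_le s b k : 0 < b -> 0 < k -> back s b k <= k.
Proof. by move=> b_gt0 k_gt0; rewrite leqNgt ltn_back // ltnNge leq_addr. Qed.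

Lemma back_block s b N i : i < b -> back s b (i.+1 + N * b) = 1 + (N - s) * b.
Proof.
move=> lt_ib; rewrite /back /bin_start /bin addSn succnK divnDMl ?divn_small //.
  by congr (1 + _ * b); lia.
exact: leq_ltn_trans lt_ib.
Qed.

Lemma legal_pair_back s b k x : 0 < b -> 0 < x <= k ->
  legal_pair s b k x <-> x < back s b k.
Proof.
move=> b_gt0 /andP[x_gt0 le_xk]; rewrite ltn_back //.
have := leq_bin b le_xk; split=> [legal | gap j]; last by rewrite /in_window; lia.
by rewrite ltnNge; apply/negP => close; apply: (legal (bin b k)); rewrite /in_window; lia.
Qed.

Lemma legal_decomp_widen s b c i i' m l : i <= i' ->
  legal_decomp s b c i m l -> legal_decomp s b c i' m l.
Proof.
move=> le_ii' [srt rng sum chn]; split=> //.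
by apply: sub_all rng => x /andP[-> lt_xi]; apply: leq_trans le_ii'.
Qed.

Lemma has_legal_decomp_widen s b c i i' m : i <= i' ->
  has_legal_decomp s b c i m -> has_legal_decomp s b c i' m.
Proof. by move=> le_ii' [l dec]; exists l; apply: legal_decomp_widen dec. Qed.

Section BackRecurrence.

Variables (s b M : nat) (c : nat -> nat).
Hypotheses (b_gt0 : 0 < b) (c1 : c 1 = 1).
Hypothesis cS : forall k, 0 < k < M -> c k.+1 = c k + c (back s b k).

Let idx := [pred i | 0 < i <= M].

Lemma c_gt0 i : 0 < i <= M -> 0 < c i.
Proof.
elim: i => [|[|i] IH] // /andP[_ le_iM]; first by rewrite c1.
by rewrite cS ?addn_gt0 ?IH //; lia.
Qed.

Lemma ltn_c : {in idx &, {homo c : i j / i < j}}.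
Proof.
apply: homo_ltn_in; first exact: ltn_trans.
  by move=> i j + + k; rewrite !inE; lia.
move=> i; rewrite !inE => /andP[i_gt0 _] /andP[_ lt_iM].
rewrite cS ?i_gt0 // -[ltnLHS]addn0 ltn_add2l c_gt0 // back_gt0.
exact: leq_trans (back_le _ _ _) (ltnW lt_iM).
Qed.

Lemma leq_cE : {in idx &, {mono c : i j / i <= j}}.
Proof. exact: leq_mono_in ltn_c. Qed.

Lemma ltn_cE : {in idx &, {mono c : i j / i < j}}.
Proof. exact: leqW_mono_in leq_cE. Qed.

Lemma legal_decomp_lt k l m :
  legal_decomp s b c M.+1 m (k :: l) -> m < c k + c (back s b k).
Proof.
case=> + + <-; elim: l k => [|x l IH] k /=.
  move=> _ /andP[/andP[k_gt0 le_kM] _] _; rewrite big_seq1 -[ltnLHS]addn0 ltn_add2l.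
  by rewrite c_gt0 // back_gt0 (leq_trans (back_le _ _ _)).
move=> /andP[lt_cxk srt] /andP[/andP[k_gt0 le_kM] rng] [legal chn].
have /andP[/andP[x_gt0 le_xM] _] := rng.
have lt_xk : x < k by rewrite -ltn_cE ?inE ?k_gt0 ?x_gt0.
have x_range : 0 < x <= k by rewrite x_gt0 ltnW.
have lt_x_back : x < back s b k by apply/(legal_pair_back s b_gt0 x_range).
have le_back_k := back_le s b_gt0 k_gt0.
have le_next : c x.+1 <= c (back s b k) by rewrite leq_cE ?inE; lia.
rewrite big_cons; have := IH x srt rng chn; rewrite -(cS (k := x)) ?x_gt0 ?(leq_trans lt_xk) //; lia.
Qed.

Lemma no_legal_decomp_next : 0 < M -> ~ has_legal_decomp s b c M.+1 (c M + c (back s b M)).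
Proof.
move=> M_gt0 [[|k l] dec].
  by case: dec => _ _; rewrite big_nil; have := c_gt0 (i := M); rewrite M_gt0 /=; lia.
have := legal_decomp_lt dec; case: dec => _ /andP[/andP[k_gt0 le_kM] _] _ _.
have [lt_kM | lt_Mk | ->] := ltngtP k M; [| lia | by rewrite ltnn].
have le_next : c k.+1 <= c M by rewrite leq_cE ?inE; lia.
by rewrite -(cS (k := k)) ?k_gt0 //; lia.
Qed.

Lemma legal_decomp_cons k l m : 0 < k <= M ->
  legal_decomp s b c (back s b k) m l -> legal_decomp s b c k.+1 (c k + m) (k :: l).
Proof.
move=> /andP[k_gt0 le_kM] [srt rng <- chn].
have le_back_k := back_le s b_gt0 k_gt0.
split; last 2 first.
- by rewrite big_cons.
- case: l {srt} rng chn => [|x l] //= /andP[/andP[x_gt0 lt_x_back] _] chn; split=> //.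
  have x_range : 0 < x <= k by rewrite x_gt0 (leq_trans (ltnW lt_x_back)).
  exact/(legal_pair_back s b_gt0 x_range).
- case: l srt rng {chn} => [|x l] //= -> /andP[/andP[x_gt0 lt_x_back] _].
  by rewrite ltn_c ?inE; lia.
- rewrite /= k_gt0 ltnSn; apply: sub_all rng => x /andP[-> lt_x_back]; lia.
Qed.

Lemma has_legal_decomp_lt k m : 0 < k <= M -> 0 < m < c k + c (back s b k) ->
  has_legal_decomp s b c k.+1 m.
Proof.
elim/ltn_ind: k m => k IH m /andP[k_gt0 le_kM] /andP[m_gt0 lt_m].
have below g m' : 0 < g <= k -> 0 < m' < c g -> has_legal_decomp s b c g m'.
  case: g => [|[|g]] // /andP[_ le_gk]; first by rewrite c1; lia.
  by rewrite cS; [apply: IH | ]; lia.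
have [lt_mck | le_ckm] := ltnP m (c k).
  by apply: has_legal_decomp_widen (leqnSn k) (below k m _ _); lia.
have [eq_mck | lt_ckm] := eqVneq m (c k).
  by exists [:: k]; split; rewrite /= ?k_gt0 ?ltnSn ?big_seq1 ?eq_mck.
have le_back_k := back_le s b_gt0 k_gt0.
have [l dec] : has_legal_decomp s b c (back s b k) (m - c k).
  by apply: below; rewrite ?back_gt0 ?le_back_k //; lia.
by exists (k :: l); rewrite -(subnKC le_ckm); apply: legal_decomp_cons; rewrite ?k_gt0.
Qed.

End BackRecurrence.

Lemma generacci_eq s b a i v : is_generacci s b a -> 0 < i -> 0 < v ->
  ~ has_legal_decomp s b a i v -> (forall m, 0 < m < v -> has_legal_decomp s b a i m) ->
  a i = v.
Proof.
move=> gen i_gt0 v_gt0 no_v below_v; have [ai_gt0 no_ai below_ai] := gen i i_gt0.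
have [lt_aiv | lt_vai | //] := ltngtP (a i) v.
- by case: no_ai; apply: below_v; rewrite ai_gt0.
- by case: no_v; apply: below_ai.
Qed.

Lemma generacci1 s b a : is_generacci s b a -> a 1 = 1.
Proof.
move=> gen; apply: (generacci_eq gen) => // [[[|x l] [_ rng sum _]] | m]; last by lia.
- by rewrite big_nil in sum.
- by move: rng => /= /andP[/andP[x_gt0 x_lt1]]; lia.
Qed.

Lemma generacci_back s b a k : 0 < b -> is_generacci s b a -> 0 < k ->
  a k.+1 = a k + a (back s b k).
Proof.
move=> b_gt0 gen; elim/ltn_ind: k => k IH k_gt0.
have a1 := generacci1 gen.
have aS i : 0 < i < k -> a i.+1 = a i + a (back s b i) by case/andP => *; apply: IH.
apply: (generacci_eq gen) => //.
- by rewrite addn_gt0 (c_gt0 b_gt0 a1 aS) // k_gt0 leqnn.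
- exact: no_legal_decomp_next.
- by move=> m; apply: (has_legal_decomp_lt b_gt0 a1 aS); rewrite k_gt0 leqnn.
Qed.

Theorem mainTheorem2 (s b : nat) (a : nat -> nat) :
  1 <= s -> 1 <= b -> is_generacci s b a ->
  forall N j : nat, s <= N -> 2 <= j <= b.+1 ->
    let n := j + N * b in
    a n = a (n - 1) + a (n - 1 - genf s b (n - 1)) /\
    a (j + N * b) = a (j - 1 + N * b) + a (1 + (N - s) * b).
Proof.
move=> _ b_gt0 gen N j le_sN /andP[j_ge2 le_jb] /=.
rewrite (_ : j - 1 + N * b = j + N * b - 1); last by lia.
have lt_ib : j - 2 < b by lia.
have : j + N * b - 1 = (j - 2).+1 + N * b by lia.
move: (j + N * b) (j - 2) lt_ib => n i lt_ib pred_n.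
have n_eq : n = (n - 1).+1 by lia.
have rec_n : a n = a (n - 1) + a (1 + (N - s) * b).
  by rewrite {1}n_eq (generacci_back b_gt0 gen) pred_n ?back_block.
have genf_n : n - 1 - genf s b (n - 1) = 1 + (N - s) * b.
  rewrite /genf pred_n addSn succnK (addnC i) modnMDl modn_small // mulnBl.
  by have := leq_mul le_sN (leqnn b); lia.
by rewrite genf_n; split.
Qed.
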